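(* Let $(\mathcal C,\otimes,I,a,l,r)$ be a monoidal category, $(F,\Delta,\varepsilon,F_2,F_0)$ and $(G,\delta,\epsilon,G_2,G_0)$ bicomonads on $\mathcal C$, and $\varphi:FG\to GF$ a comonad distributive law. The following are equivalent: (1) $(\mathcal C^{(F,G)}(\varphi),\otimes,I,a,l,r)$ is a monoidal category, where for bicomodules $X,Y$ the coactions on $X\otimes Y$ are $F_2(X,Y)\circ(\theta^X\otimes\theta^Y)$ and $G_2(X,Y)\circ(\rho^X\otimes\rho^Y)$ and $I$ has coactions $F_0,G_0$; (2) $\varphi$ is a monoidal comonad distributive law; (3) the smash coproduct $FG$ (comultiplication $F\varphi_{GX}\circ FF\delta_X\circ\Delta_{GX}$, counit $\epsilon_X\circ\varepsilon_{GX}$, monoidal structure $(FG)_2(M,N)=F(G_2(M,N))\circ F_2(GM,GN)$, $(FG)_0=F(G_0)\circ F_0$) is a bicomonad; (4) in the 2-category $\mathbf{Cmd}(\mathbf{Cat})$, $F_2$ is a 2-cell from the 1-cell $(\otimes\circ(F\times F),w)$ to the 1-cell $(F\circ\otimes,w')$, both from $(\mathcal C\times\mathcal C,G\times G,\delta\times\delta,\epsilon\times\epsilon)$ to $(\mathcal C,G,\delta,\epsilon)$, where $w_{(X,Y)}=G_2(FX,FY)\circ(\varphi_X\otimes\varphi_Y)$ and $w'_{(X,Y)}=\varphi_{X\otimes Y}\circ F(G_2(X,Y))$; and $F_0$ is a 2-cell from the 1-cell $(I,G_0)$ to the 1-cell $(FI,\varphi_I\circ F(G_0))$, both from $(\mathfrak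 I,\mathrm{id},\mathrm{id},\mathrm{id})$ to $(\mathcal C,G,\delta,\epsilon)$, where $\mathfrak I$ is the terminal category; (5) $(\otimes,F_2,G_2):(\mathcal C\times\mathcal C,F\times F,G\times G,\varphi\times\varphi)\to(\mathcal C,F,G,\varphi)$ and $(I,F_0,G_0):(\mathfrak I,\mathrm{id},\mathrm{id},\mathrm{id})\to(\mathcal C,F,G,\varphi)$ are 1-cells in $\mathbf{CC}(\mathbf{Cat})$.
   Context: Comonads, comonad distributive laws $\varphi:FG\to GF$ (conditions $G\varphi\circ\varphi G\circ F\delta=\delta F\circ\varphi$, $\varphi F\circ F\varphi\circ\Delta G=G\Delta\circ\varphi$, $G\varepsilon\circ\varphi=\varepsilon G$, $\epsilon F\circ\varphi=F\epsilon$), $\varphi$-bicomodules $(M,\theta^M,\rho^M)$ ($F$-comodule and $G$-comodule with $\varphi_M\circ F\rho^M\circ\theta^M=G\theta^M\circ\rho^M$) forming the category $\mathcal C^{(F,G)}(\varphi)$, and bicomonads (comonads that are monoidal functors $(G,G_2,G_0)$ with $G(G_2(X,Y))\circ G_2(GX,GY)\circ(\delta_X\otimes\delta_Y)=\delta_{X\otimes Y}\circ G_2(X,Y)$, $\epsilon_{X\otimes Y}\circ G_2=\epsilon_X\otimes\epsilon_Y$, $G(G_0)\circ G_0=\delta_I\circ G_0$, $\epsilon_I\circ G_0=\mathrm{id}_I$) are as usual. $\varphi$ is a monoidal comonad distributive law if $\varphi_{M\otimes N}\circ F(G_2(M,N))\circ F_2(GM,GN)=G(F_2(M,N))\circ G_2(FM,FN)\circ(\varphi_M\otimes\varphi_N)$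 and $\varphi_I\circ F(G_0)\circ F_0=G(F_0)\circ G_0$. The 2-category $\mathbf{Cmd}(\mathbb C)$ (for a 2-category $\mathbb C$, here $\mathbf{Cat}$): 0-cells are comonads $(Y,T,\delta,\epsilon)$ on objects $Y$; a 1-cell $(Y,T,\delta,\epsilon)\to(Y',T',\delta',\epsilon')$ is a pair $(W,w)$ with $W:Y\to Y'$ and $w:WT\Rightarrow T'W$ satisfying $\delta'W\circ w=T'w\circ wT\circ W\delta$ and $\epsilon'W\circ w=W\epsilon$; a 2-cell $(W,w)\Rightarrow(V,v)$ is $\chi:W\Rightarrow V$ with $v\circ\chi T=T'\chi\circ w$. The 2-category $\mathbf{CC}(\mathbb C)$: 0-cells $(C,D,T,\varphi)$ with $D=(D,\Delta,\varepsilon)$, $T=(T,\delta,\epsilon)$ comonads on $C$ and $\varphi:DT\Rightarrow TD$ a comonad distributive law; a 1-cell $(C,D,T,\varphi)\to(C',D',T',\varphi')$ is $(J,j_d,j_t)$ with $J:C\to C'$, $j_d:JD\Rightarrow D'J$, $j_t:JT\Rightarrow T'J$ satisfying $\Delta'J\circ j_d=D'j_d\circ j_dD\circ J\Delta$, $J\varepsilon=\varepsilon'J\circ j_d$, $\delta'J\circ j_t=T'j_t\circ j_tT\circ J\delta$, $J\epsilon=\epsilon'J\circ j_t$, and $T'j_d\circ j_tD\circ J\varphi=\varphi'J\circ D'j_t\circ j_dT$ as maps $JDT\Rightarrow T'D'J$. *)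

Set Implicit Arguments.
Unset Strict Implicit.
Set Primitive Projections.

(* Pairs with definitional eta (objects/morphisms of product categories). *)
Record prd (A B : Type) : Type := mkprd { pr1 : A; pr2 : B }.
Arguments mkprd {A B} _ _.
Arguments pr1 {A B} _.
Arguments pr2 {A B} _.

Record Category : Type := {
  ob :> Type;
  hom : ob -> ob -> Type;
  idm : forall A, hom A A;
  comp : forall A B C, hom B C -> hom A B -> hom A C;
  comp_idl : forall A B (f : hom A B), comp (idm B) f = f;
  comp_idr : forall A B (f : hom A B), comp f (idm A) = f;
  comp_assoc : forall A B C D (h : hom C D) (g : hom B C) (f : hom A B),
      comp h (comp g f) = comp (comp h g) f }.
Arguments hom {c} _ _.
Arguments idm {c} A.
Arguments comp {c A B C} _ _.
Notation "g ∘ f" := (comp g f) (at level 40, left associativity).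

Record Functor (C D : Category) : Type := {
  fobj :> C -> D;
  fmap : forall A B : C, hom A B -> hom (fobj A) (fobj B);
  fmap_id : forall A, fmap (idm A) = idm (fobj A);
  fmap_comp : forall A B E (g : hom B E) (f : hom A B),
      fmap (g ∘ f) = fmap g ∘ fmap f }.
Arguments fmap {C D} f {A B} _ : rename.

Definition natural {C D : Category} (F G : Functor C D)
  (eta : forall X, hom (F X) (G X)) : Prop :=
  forall X Y (f : hom X Y), eta Y ∘ fmap F f = fmap G f ∘ eta X.

Definition Fid (C : Category) : Functor C C.
Proof.
  refine (@Build_Functor C C (fun X => X) (fun A B f => f) _ _);
    reflexivity.
Defined.

Definition Fcomp {C D E : Category} (G : Functor D E) (F : Functor C D)
  : Functor C E.
Proof.
  refine (@Build_Functor C E (fun X => G (F X))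
            (fun A B f => fmap G (fmap F f)) _ _).
  - intro A; rewrite fmap_id; apply fmap_id.
  - intros; rewrite fmap_comp; apply fmap_comp.
Defined.

Definition ProdCat (C D : Category) : Category.
Proof.
  refine (@Build_Category (prd C D)
            (fun p q => prd (hom (pr1 p) (pr1 q)) (hom (pr2 p) (pr2 q)))
            (fun p => mkprd (idm (pr1 p)) (idm (pr2 p)))
            (fun p q r g f => mkprd (pr1 g ∘ pr1 f) (pr2 g ∘ pr2 f)) _ _ _).
  - intros A B f; simpl; rewrite !comp_idl; reflexivity.
  - intros A B f; simpl; rewrite !comp_idr; reflexivity.
  - intros; simpl; rewrite !comp_assoc; reflexivity.
Defined.

Definition Fprod {C C' D D' : Category} (F : Functor C D) (G : Functor C' D')
  : Functor (ProdCat C C') (ProdCat D D').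
Proof.
  refine (@Build_Functor (ProdCat C C') (ProdCat D D')
            (fun p => mkprd (F (pr1 p)) (G (pr2 p)))
            (fun p q f => mkprd (fmap F (pr1 f)) (fmap G (pr2 f))) _ _).
  - intros; simpl; rewrite !fmap_id; reflexivity.
  - intros; simpl; rewrite !fmap_comp; reflexivity.
Defined.

Definition TermCat : Category.
Proof.
  refine (@Build_Category unit (fun _ _ => unit) (fun _ => tt)
            (fun _ _ _ _ _ => tt) _ _ _);
    intros; repeat match goal with u : unit |- _ => destruct u end;
    reflexivity.
Defined.

Definition Fconst {C : Category} (X : C) : Functor TermCat C.
Proof.
  refine (@Build_Functor TermCat C (fun _ => X) (fun _ _ _ => idm X) _ _).
  - reflexivity.
  - intros; simpl; rewrite comp_idl; reflexivity.
Defined.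

Definition tob {C : Category} (T : Functor (ProdCat C C) C) (X Y : C) : C :=
  T (mkprd X Y).
Definition tmor {C : Category} (T : Functor (ProdCat C C) C) {X Y X' Y' : C}
  (f : hom X X') (g : hom Y Y') : hom (tob T X Y) (tob T X' Y') :=
  @fmap _ _ T (mkprd X Y) (mkprd X' Y') (mkprd f g).

Definition is_monoidal (C : Category) (T : Functor (ProdCat C C) C) (I : C)
  (a : forall X Y Z, hom (tob T (tob T X Y) Z) (tob T X (tob T Y Z)))
  (ai : forall X Y Z, hom (tob T X (tob T Y Z)) (tob T (tob T X Y) Z))
  (l : forall X, hom (tob T I X) X) (li : forall X, hom X (tob T I X))
  (r : forall X, hom (tob T X I) X) (ri : forall X, hom X (tob T X I)) : Prop :=
  (forall X Y Z, a X Y Z ∘ ai X Y Z = idm _ /\ ai X Y Z ∘ a X Y Z = idm _) /\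
  (forall X, l X ∘ li X = idm _ /\ li X ∘ l X = idm _) /\
  (forall X, r X ∘ ri X = idm _ /\ ri X ∘ r X = idm _) /\
  (forall X X' Y Y' Z Z' (f : hom X X') (g : hom Y Y') (h : hom Z Z'),
      a X' Y' Z' ∘ tmor T (tmor T f g) h = tmor T f (tmor T g h) ∘ a X Y Z) /\
  (forall X X' (f : hom X X'), l X' ∘ tmor T (idm I) f = f ∘ l X) /\
  (forall X X' (f : hom X X'), r X' ∘ tmor T f (idm I) = f ∘ r X) /\
  (forall W X Y Z,
      a W X (tob T Y Z) ∘ a (tob T W X) Y Z
      = tmor T (idm W) (a X Y Z) ∘ a W (tob T X Y) Z ∘ tmor T (a W X Y) (idm Z)) /\
  (forall X Y, tmor T (idm X) (l Y) ∘ a X I Y = tmor T (r X) (idm Y)).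

Record MonoidalCategory : Type := {
  mc :> Category;
  tensor : Functor (ProdCat mc mc) mc;
  munit : mc;
  massoc : forall X Y Z : mc,
      hom (tob tensor (tob tensor X Y) Z) (tob tensor X (tob tensor Y Z));
  massoc_inv : forall X Y Z : mc,
      hom (tob tensor X (tob tensor Y Z)) (tob tensor (tob tensor X Y) Z);
  mlunit : forall X : mc, hom (tob tensor munit X) X;
  mlunit_inv : forall X : mc, hom X (tob tensor munit X);
  mrunit : forall X : mc, hom (tob tensor X munit) X;
  mrunit_inv : forall X : mc, hom X (tob tensor X munit);
  m_ax : @is_monoidal mc tensor munit massoc massoc_inv mlunit mlunit_inv mrunit mrunit_inv }.
Arguments tensor m : clear implicits.
Arguments munit m : clear implicits.
Arguments massoc m X Y Z : clear implicits.
Arguments massoc_inv m X Y Z : clear implicits.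
Arguments mlunit m X : clear implicits.
Arguments mlunit_inv m X : clear implicits.
Arguments mrunit m X : clear implicits.
Arguments mrunit_inv m X : clear implicits.

Notation "X ⊗ Y" := (tob (tensor _) X Y) (at level 30, right associativity).
Definition tm {M : MonoidalCategory} {X Y X' Y' : M} (f : hom X X') (g : hom Y Y')
  : hom (X ⊗ Y) (X' ⊗ Y') := tmor (tensor M) f g.

Definition is_comonad {C : Category} (H : Functor C C)
  (d : forall X, hom (H X) (H (H X))) (e : forall X, hom (H X) X) : Prop :=
  natural (F := H) (G := Fcomp H H) d /\
  natural (F := H) (G := Fid C) e /\
  (forall X, fmap H (d X) ∘ d X = d (H X) ∘ d X) /\
  (forall X, e (H X) ∘ d X = idm (H X)) /\
  (forall X, fmap H (e X) ∘ d X = idm (H X)).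

Definition is_monoidal_functor {M : MonoidalCategory} (H : Functor M M)
  (H2 : forall X Y : M, hom (H X ⊗ H Y) (H (X ⊗ Y))) (H0 : hom (munit M) (H (munit M)))
  : Prop :=
  (forall X X' Y Y' (f : hom X X') (g : hom Y Y'),
      H2 X' Y' ∘ tm (fmap H f) (fmap H g) = fmap H (tm f g) ∘ H2 X Y) /\
  (forall X Y Z : M,
      fmap H (massoc M X Y Z) ∘ H2 (X ⊗ Y) Z ∘ tm (H2 X Y) (idm (H Z))
      = H2 X (Y ⊗ Z) ∘ tm (idm (H X)) (H2 Y Z) ∘ massoc M (H X) (H Y) (H Z)) /\
  (forall X : M,
      fmap H (mlunit M X) ∘ H2 (munit M) X ∘ tm H0 (idm (H X)) = mlunit M (H X)) /\
  (forall X : M,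
      fmap H (mrunit M X) ∘ H2 X (munit M) ∘ tm (idm (H X)) H0 = mrunit M (H X)).

Definition bicomonad_compat {M : MonoidalCategory} (H : Functor M M)
  (d : forall X, hom (H X) (H (H X))) (e : forall X, hom (H X) X)
  (H2 : forall X Y : M, hom (H X ⊗ H Y) (H (X ⊗ Y))) (H0 : hom (munit M) (H (munit M)))
  : Prop :=
  (forall X Y : M,
      fmap H (H2 X Y) ∘ H2 (H X) (H Y) ∘ tm (d X) (d Y) = d (X ⊗ Y) ∘ H2 X Y) /\
  (forall X Y : M, e (X ⊗ Y) ∘ H2 X Y = tm (e X) (e Y)) /\
  (fmap H H0 ∘ H0 = d (munit M) ∘ H0) /\
  (e (munit M) ∘ H0 = idm (munit M)).

Definition is_bicomonad {M : MonoidalCategory} (H : Functor M M)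
  (d : forall X, hom (H X) (H (H X))) (e : forall X, hom (H X) X)
  (H2 : forall X Y : M, hom (H X ⊗ H Y) (H (X ⊗ Y))) (H0 : hom (munit M) (H (munit M)))
  : Prop :=
  is_comonad d e /\ is_monoidal_functor H2 H0 /\ bicomonad_compat d e H2 H0.

Record Bicomonad (M : MonoidalCategory) : Type := {
  bfun :> Functor M M;
  bdelta : forall X, hom (bfun X) (bfun (bfun X));
  beps : forall X, hom (bfun X) X;
  b2 : forall X Y : M, hom (bfun X ⊗ bfun Y) (bfun (X ⊗ Y));
  b0 : hom (munit M) (bfun (munit M));
  b_ax : is_bicomonad bdelta beps b2 b0 }.
Arguments bdelta {M} b X.
Arguments beps {M} b X.
Arguments b2 {M} b X Y.
Arguments b0 {M} b.

Definition is_distr_law {C : Category} (F : Functor C C)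
  (DF : forall X, hom (F X) (F (F X))) (eF : forall X, hom (F X) X)
  (G : Functor C C)
  (dG : forall X, hom (G X) (G (G X))) (eG : forall X, hom (G X) X)
  (phi : forall X, hom (F (G X)) (G (F X))) : Prop :=
  natural (F := Fcomp F G) (G := Fcomp G F) phi /\
  (forall X, fmap G (phi X) ∘ phi (G X) ∘ fmap F (dG X) = dG (F X) ∘ phi X) /\
  (forall X, phi (F X) ∘ fmap F (phi X) ∘ DF (G X) = fmap G (DF X) ∘ phi X) /\
  (forall X, fmap G (eF X) ∘ phi X = eF (G X)) /\
  (forall X, eG (F X) ∘ phi X = fmap F (eG X)).

Definition monoidal_distr_law {M : MonoidalCategory} (F G : Bicomonad M)
  (phi : forall X, hom (F (G X)) (G (F X))) : Prop :=
  (forall X Y : M,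
      phi (X ⊗ Y) ∘ fmap F (b2 G X Y) ∘ b2 F (G X) (G Y)
      = fmap G (b2 F X Y) ∘ b2 G (F X) (F Y) ∘ tm (phi X) (phi Y)) /\
  (phi (munit M) ∘ fmap F (b0 G) ∘ b0 F = fmap G (b0 F) ∘ b0 G).

Definition is_comodule {C : Category} (H : Functor C C)
  (d : forall X, hom (H X) (H (H X))) (e : forall X, hom (H X) X)
  (X : C) (c : hom X (H X)) : Prop :=
  d X ∘ c = fmap H c ∘ c /\ e X ∘ c = idm X.

Definition is_bicomodule {M : MonoidalCategory} (F G : Bicomonad M)
  (phi : forall X, hom (F (G X)) (G (F X)))
  (X : M) (th : hom X (F X)) (rho : hom X (G X)) : Prop :=
  is_comodule (bdelta F) (beps F) th /\ is_comodule (bdelta G) (beps G) rho /\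
  phi X ∘ fmap F rho ∘ th = fmap G th ∘ rho.
Arguments is_bicomodule {M F G} phi {X} th rho.

Definition is_bicomod_map {M : MonoidalCategory} (F G : Bicomonad M)
  {X Y : M} (thX : hom X (F X)) (rhoX : hom X (G X))
  (thY : hom Y (F Y)) (rhoY : hom Y (G Y)) (f : hom X Y) : Prop :=
  thY ∘ f = fmap F f ∘ thX /\ rhoY ∘ f = fmap G f ∘ rhoX.
Arguments is_bicomod_map {M} F G {X Y} thX rhoX thY rhoY f.

Definition tco {M : MonoidalCategory} (H : Bicomonad M) {X Y : M}
  (cX : hom X (H X)) (cY : hom Y (H Y)) : hom (X ⊗ Y) (H (X ⊗ Y)) :=
  b2 H X Y ∘ tm cX cY.
Arguments tco {M} H {X Y} cX cY.

(* (C^{(F,G)}(phi), ⊗, I, a, l, r) is a monoidal category, i.e. the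
   monoidal structure of C (with the coactions of the statement) lifts
   along the faithful forgetful functor: tensor products of bicomodules
   and I are bicomodules, tensor products of bicomodule maps and the
   components of a, l, r (and their inverses) are bicomodule maps.  The
   monoidal-category axioms then hold because they hold in C. *)
Definition lifted_monoidal {M : MonoidalCategory} (F G : Bicomonad M)
  (phi : forall X, hom (F (G X)) (G (F X))) : Prop :=
  (forall (X : M) (thX : hom X (F X)) (rhoX : hom X (G X)) (Y : M) (thY : hom Y (F Y)) (rhoY : hom Y (G Y)),
      is_bicomodule phi thX rhoX -> is_bicomodule phi thY rhoY ->
      is_bicomodule phi (tco F thX thY) (tco G rhoX rhoY)) /\
  is_bicomodule phi (b0 F) (b0 G) /\
  (forall (X : M) (thX : hom X (F X)) (rhoX : hom X (G X)) (X' : M) (thX' : hom X' (F X')) (rhoX' : hom X' (G X')) (Y : M) (thY : hom Y (F Y)) (rhoY : hom Y (G Y)) (Y' : M) (thY' : hom Y' (F Y')) (rhoY' : hom Y' (G Y'))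
          (f : hom X X') (g : hom Y Y'),
      is_bicomodule phi thX rhoX -> is_bicomodule phi thX' rhoX' ->
      is_bicomodule phi thY rhoY -> is_bicomodule phi thY' rhoY' ->
      is_bicomod_map F G thX rhoX thX' rhoX' f ->
      is_bicomod_map F G thY rhoY thY' rhoY' g ->
      is_bicomod_map F G (tco F thX thY) (tco G rhoX rhoY)
                         (tco F thX' thY') (tco G rhoX' rhoY') (tm f g)) /\
  (forall (X : M) (thX : hom X (F X)) (rhoX : hom X (G X)) (Y : M) (thY : hom Y (F Y)) (rhoY : hom Y (G Y)) (Z : M) (thZ : hom Z (F Z)) (rhoZ : hom Z (G Z)),
      is_bicomodule phi thX rhoX -> is_bicomodule phi thY rhoY ->
      is_bicomodule phi thZ rhoZ ->
      is_bicomod_map F G (tco F (tco F thX thY) thZ) (tco G (tco G rhoX rhoY) rhoZ)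
                         (tco F thX (tco F thY thZ)) (tco G rhoX (tco G rhoY rhoZ))
                         (massoc M X Y Z) /\
      is_bicomod_map F G (tco F thX (tco F thY thZ)) (tco G rhoX (tco G rhoY rhoZ))
                         (tco F (tco F thX thY) thZ) (tco G (tco G rhoX rhoY) rhoZ)
                         (massoc_inv M X Y Z)) /\
  (forall (X : M) (thX : hom X (F X)) (rhoX : hom X (G X)),
      is_bicomodule phi thX rhoX ->
      is_bicomod_map F G (tco F (b0 F) thX) (tco G (b0 G) rhoX) thX rhoX (mlunit M X) /\
      is_bicomod_map F G thX rhoX (tco F (b0 F) thX) (tco G (b0 G) rhoX) (mlunit_inv M X) /\
      is_bicomod_map F G (tco F thX (b0 F)) (tco G rhoX (b0 G)) thX rhoX (mrunit M X) /\
      is_bicomod_map F G thX rhoX (tco F thX (b0 F)) (tco G rhoX (b0 G)) (mrunit_inv M X)).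

Definition smash_delta {M : MonoidalCategory} (F G : Bicomonad M)
  (phi : forall X, hom (F (G X)) (G (F X))) (X : M)
  : hom (F (G X)) (F (G (F (G X)))) :=
  fmap F (phi (G X)) ∘ fmap F (fmap F (bdelta G X)) ∘ bdelta F (G X).
Definition smash_eps {M : MonoidalCategory} (F G : Bicomonad M) (X : M)
  : hom (F (G X)) X := beps G X ∘ beps F (G X).
Definition smash2 {M : MonoidalCategory} (F G : Bicomonad M) (X Y : M)
  : hom (F (G X) ⊗ F (G Y)) (F (G (X ⊗ Y))) :=
  fmap F (b2 G X Y) ∘ b2 F (G X) (G Y).
Definition smash0 {M : MonoidalCategory} (F G : Bicomonad M)
  : hom (munit M) (F (G (munit M))) := fmap F (b0 G) ∘ b0 F.

Definition is_cmd_1cell {Y Y' : Category}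
  (T : Functor Y Y) (d : forall y, hom (T y) (T (T y))) (e : forall y, hom (T y) y)
  (T' : Functor Y' Y') (d' : forall y, hom (T' y) (T' (T' y))) (e' : forall y, hom (T' y) y)
  (W : Functor Y Y') (w : forall y, hom (W (T y)) (T' (W y))) : Prop :=
  natural (F := Fcomp W T) (G := Fcomp T' W) w /\
  (forall y, d' (W y) ∘ w y = fmap T' (w y) ∘ w (T y) ∘ fmap W (d y)) /\
  (forall y, e' (W y) ∘ w y = fmap W (e y)).
Arguments is_cmd_1cell {Y Y' T} d e {T'} d' e' W w.

Definition is_cmd_2cell {Y Y' : Category} (T : Functor Y Y) (T' : Functor Y' Y')
  (W : Functor Y Y') (w : forall y, hom (W (T y)) (T' (W y)))
  (V : Functor Y Y') (v : forall y, hom (V (T y)) (T' (V y)))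
  (chi : forall y, hom (W y) (V y)) : Prop :=
  natural (F := W) (G := V) chi /\
  (forall y, v y ∘ chi (T y) = fmap T' (chi y) ∘ w y).
Arguments is_cmd_2cell {Y Y'} T T' W w V v chi.

Definition prod_delta {M : MonoidalCategory} (H : Bicomonad M) (p : ProdCat M M)
  : hom (Fprod H H p) (Fprod H H (Fprod H H p)) :=
  mkprd (bdelta H (pr1 p)) (bdelta H (pr2 p)).
Definition prod_eps {M : MonoidalCategory} (H : Bicomonad M) (p : ProdCat M M)
  : hom (Fprod H H p) p := mkprd (beps H (pr1 p)) (beps H (pr2 p)).
Definition term_delta (t : TermCat) : hom (Fid TermCat t) (Fid TermCat (Fid TermCat t))
  := idm t.
Definition term_eps (t : TermCat) : hom (Fid TermCat t) t := idm t.

Definition cmd_condition {M : MonoidalCategory} (F G : Bicomonad M)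
  (phi : forall X, hom (F (G X)) (G (F X))) : Prop :=
  let W1 := Fcomp (tensor M) (Fprod F F) in
  let W2 := Fcomp F (tensor M) in
  let w1 := fun p : ProdCat M M =>
              b2 G (F (pr1 p)) (F (pr2 p)) ∘ tm (phi (pr1 p)) (phi (pr2 p)) in
  let w2 := fun p : ProdCat M M =>
              phi (pr1 p ⊗ pr2 p) ∘ fmap F (b2 G (pr1 p) (pr2 p)) in
  let U1 := Fconst (munit M) in
  let U2 := Fconst (F (munit M)) in
  let u1 := fun _ : TermCat => b0 G in
  let u2 := fun _ : TermCat => phi (munit M) ∘ fmap F (b0 G) in
  (is_cmd_1cell (prod_delta G) (prod_eps G) (bdelta G) (beps G) W1 w1 /\
   is_cmd_1cell (prod_delta G) (prod_eps G) (bdelta G) (beps G) W2 w2 /\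
   is_cmd_2cell (Fprod G G) G W1 w1 W2 w2 (fun p => b2 F (pr1 p) (pr2 p))) /\
  (is_cmd_1cell term_delta term_eps (bdelta G) (beps G) U1 u1 /\
   is_cmd_1cell term_delta term_eps (bdelta G) (beps G) U2 u2 /\
   is_cmd_2cell (Fid TermCat) G U1 u1 U2 u2 (fun _ => b0 F)).

Definition is_cc_1cell {C C' : Category}
  (D : Functor C C) (dD : forall y, hom (D y) (D (D y))) (eD : forall y, hom (D y) y)
  (T : Functor C C) (dT : forall y, hom (T y) (T (T y))) (eT : forall y, hom (T y) y)
  (phi : forall y, hom (D (T y)) (T (D y)))
  (D' : Functor C' C') (dD' : forall y, hom (D' y) (D' (D' y))) (eD' : forall y, hom (D' y) y)
  (T' : Functor C' C') (dT' : forall y, hom (T' y) (T' (T' y))) (eT' : forall y, hom (T' y) y)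
  (phi' : forall y, hom (D' (T' y)) (T' (D' y)))
  (J : Functor C C') (jd : forall y, hom (J (D y)) (D' (J y)))
  (jt : forall y, hom (J (T y)) (T' (J y))) : Prop :=
  is_cmd_1cell dD eD dD' eD' J jd /\
  is_cmd_1cell dT eT dT' eT' J jt /\
  (forall y, fmap T' (jd y) ∘ jt (D y) ∘ fmap J (phi y)
             = phi' (J y) ∘ fmap D' (jt y) ∘ jd (T y)).
Arguments is_cc_1cell {C C' D} dD eD {T} dT eT phi {D'} dD' eD' {T'} dT' eT' phi' J jd jt.

Definition cc_condition {M : MonoidalCategory} (F G : Bicomonad M)
  (phi : forall X, hom (F (G X)) (G (F X))) : Prop :=
  is_cc_1cell (prod_delta F) (prod_eps F) (prod_delta G) (prod_eps G)
              (fun p : ProdCat M M => mkprd (phi (pr1 p)) (phi (pr2 p)))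
              (bdelta F) (beps F) (bdelta G) (beps G) phi
              (tensor M) (fun p => b2 F (pr1 p) (pr2 p)) (fun p => b2 G (pr1 p) (pr2 p)) /\
  is_cc_1cell term_delta term_eps term_delta term_eps
              (fun t : TermCat => idm t)
              (bdelta F) (beps F) (bdelta G) (beps G) phi
              (Fconst (munit M)) (fun _ => b0 F) (fun _ => b0 G).

Arguments monoidal_distr_law {M} F G phi.
Arguments lifted_monoidal {M} F G phi.
Arguments cmd_condition {M} F G phi.
Arguments cc_condition {M} F G phi.
Arguments smash_delta {M} F G phi X.
Arguments smash_eps {M} F G X.
Arguments smash2 {M} F G X Y.
Arguments smash0 {M} F G.


(* Conditions (2)-(5) are all the single equation "phi is compatible with
   F_2, G_2 and with F_0, G_0" in disguise.  (4) and (5) are just unfolded: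
   their 1-cell conditions hold for every bicomonad and distributive law, and
   the 2-cell / mixed conditions are literally (2).  For (3), the comonad and
   monoidal-functor axioms of the smash coproduct hold for any distributive
   law, and its compatibility with the comultiplication reduces to (2);
   conversely, precomposing that compatibility with the counits recovers (2).
   For (1), (2) makes tensor products and the unit bicomodules; conversely,
   (2) is obtained from the bicomodule condition on the tensor product of two
   cofree bicomodules FGX, projected along the counits. *)

Lemma comp_prefix2 {C : Category} {A B E : C} {a : hom B E} {b : hom A B} {r : hom A E} :
  a ∘ b = r -> forall Z (k : hom E Z), k ∘ a ∘ b = k ∘ r.
Proof. intros H Z k; rewrite <- H, comp_assoc; reflexivity. Qed.
Lemma comp_prefix3 {C : Category} {A B B' E : C} {a : hom B' E} {b : hom B B'}
  {c : hom A B} {r : hom A E} :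
  a ∘ b ∘ c = r -> forall Z (k : hom E Z), k ∘ a ∘ b ∘ c = k ∘ r.
Proof. intros H Z k; rewrite <- H, !comp_assoc; reflexivity. Qed.
Lemma comp_prefix4 {C : Category} {A B B' B'' E : C} {a : hom B'' E} {b : hom B' B''}
  {c : hom B B'} {d : hom A B} {r : hom A E} :
  a ∘ b ∘ c ∘ d = r -> forall Z (k : hom E Z), k ∘ a ∘ b ∘ c ∘ d = k ∘ r.
Proof. intros H Z k; rewrite <- H, !comp_assoc; reflexivity. Qed.
Lemma comp_prefix5 {C : Category} {A B B' B'' B3 E : C} {a : hom B3 E} {a' : hom B'' B3}
  {b : hom B' B''} {c : hom B B'} {d : hom A B} {r : hom A E} :
  a ∘ a' ∘ b ∘ c ∘ d = r -> forall Z (k : hom E Z), k ∘ a ∘ a' ∘ b ∘ c ∘ d = k ∘ r.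
Proof. intros H Z k; rewrite <- H, !comp_assoc; reflexivity. Qed.
Lemma comp_prefix6 {C : Category} {A B B' B'' B3 B4 E : C} {a0 : hom B4 E} {a : hom B3 B4}
  {a' : hom B'' B3} {b : hom B' B''} {c : hom B B'} {d : hom A B} {r : hom A E} :
  a0 ∘ a ∘ a' ∘ b ∘ c ∘ d = r ->
  forall Z (k : hom E Z), k ∘ a0 ∘ a ∘ a' ∘ b ∘ c ∘ d = k ∘ r.
Proof. intros H Z k; rewrite <- H, !comp_assoc; reflexivity. Qed.

Lemma fmap_chain2 {C D : Category} (H : Functor C D) {A B E : C} {a : hom B E} {b : hom A B}
  {r : hom A E} :
  a ∘ b = r -> fmap H a ∘ fmap H b = fmap H r.
Proof. intros e; rewrite <- e, fmap_comp; reflexivity. Qed.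
Lemma fmap_chain3 {C D : Category} (H : Functor C D) {A B B' E : C} {a : hom B' E}
  {b : hom B B'} {c : hom A B} {r : hom A E} :
  a ∘ b ∘ c = r -> fmap H a ∘ fmap H b ∘ fmap H c = fmap H r.
Proof. intros e; rewrite <- e, !fmap_comp; reflexivity. Qed.
Lemma fmap_chain4 {C D : Category} (H : Functor C D) {A B B' B'' E : C} {a : hom B'' E}
  {b : hom B' B''} {c : hom B B'} {d : hom A B} {r : hom A E} :
  a ∘ b ∘ c ∘ d = r -> fmap H a ∘ fmap H b ∘ fmap H c ∘ fmap H d = fmap H r.
Proof. intros e; rewrite <- e, !fmap_comp; reflexivity. Qed.

Lemma fmap_inverse_coaction {C : Category} (H : Functor C C) {X Y : C}
  (c : hom X (H X)) (c' : hom Y (H Y)) (f : hom X Y) (fi : hom Y X) :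
  c' ∘ f = fmap H f ∘ c -> f ∘ fi = idm _ -> fi ∘ f = idm _ -> c ∘ fi = fmap H fi ∘ c'.
Proof.
  intros Hf Hffi Hfif.
  rewrite <- (comp_idl (c ∘ fi)), <- (fmap_id H X), <- Hfif, fmap_comp, <- !comp_assoc.
  rewrite (comp_assoc (fmap H f)), <- Hf, <- comp_assoc, Hffi, comp_idr; reflexivity.
Qed.

Section TensorMorphisms.
Context {M : MonoidalCategory}.

Lemma tm_comp {X Y Z X' Y' Z' : M} (g : hom Y Z) (f : hom X Y) (g' : hom Y' Z')
  (f' : hom X' Y') : tm (g ∘ f) (g' ∘ f') = tm g g' ∘ tm f f'.
Proof.
  exact (@fmap_comp _ _ (tensor M) (mkprd X X') (mkprd Y Y') (mkprd Z Z')
           (mkprd g g') (mkprd f f')).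
Qed.
Lemma tm_id (X Y : M) : tm (idm X) (idm Y) = idm (X ⊗ Y).
Proof. exact (fmap_id (tensor M) (mkprd X Y)). Qed.

Lemma tm_comp_l {A B A' B' C' : M} (a : hom A B) (g : hom B' C') (f : hom A' B') :
  tm (g ∘ f) a = tm g (idm B) ∘ tm f a.
Proof. rewrite <- tm_comp, comp_idl; reflexivity. Qed.
Lemma tm_comp_r {A B A' B' C' : M} (a : hom A B) (g : hom B' C') (f : hom A' B') :
  tm a (g ∘ f) = tm (idm B) g ∘ tm a f.
Proof. rewrite <- tm_comp, comp_idl; reflexivity. Qed.
Lemma tm_split_l {A B A' B' : M} (a : hom A B) (b : hom A' B') :
  tm a b = tm a (idm B') ∘ tm (idm A) b.
Proof. rewrite <- tm_comp, comp_idr, comp_idl; reflexivity. Qed.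
Lemma tm_split_r {A B A' B' : M} (a : hom A B) (b : hom A' B') :
  tm a b = tm (idm B) b ∘ tm a (idm A').
Proof. rewrite <- tm_comp, comp_idr, comp_idl; reflexivity. Qed.

Lemma tm_chain2 {A B E A' B' E' : M} {a : hom B E} {b : hom A B} {r : hom A E}
  {a' : hom B' E'} {b' : hom A' B'} {r' : hom A' E'} :
  a ∘ b = r -> a' ∘ b' = r' -> tm a a' ∘ tm b b' = tm r r'.
Proof. intros e e'; rewrite <- e, <- e', tm_comp; reflexivity. Qed.
Lemma tm_chain3 {A B C E A' B' C' E' : M} {a : hom C E} {b : hom B C} {c : hom A B}
  {r : hom A E} {a' : hom C' E'} {b' : hom B' C'} {c' : hom A' B'} {r' : hom A' E'} :
  a ∘ b ∘ c = r -> a' ∘ b' ∘ c' = r' -> tm a a' ∘ tm b b' ∘ tm c c' = tm r r'.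
Proof. intros e e'; rewrite <- e, <- e', !tm_comp; reflexivity. Qed.
Lemma tm_chain4 {A B C D E A' B' C' D' E' : M} {a : hom D E} {b : hom C D} {c : hom B C}
  {d : hom A B} {r : hom A E} {a' : hom D' E'} {b' : hom C' D'} {c' : hom B' C'}
  {d' : hom A' B'} {r' : hom A' E'} :
  a ∘ b ∘ c ∘ d = r -> a' ∘ b' ∘ c' ∘ d' = r' ->
  tm a a' ∘ tm b b' ∘ tm c c' ∘ tm d d' = tm r r'.
Proof. intros e e'; rewrite <- e, <- e', !tm_comp; reflexivity. Qed.

End TensorMorphisms.

(* Rewriting with an equation between composites of morphisms, in a goal kept
   left-associated by [assoc_norm]; [rw e under H, K] rewrites with the image
   of [e] under [fmap H ∘ fmap K], [rw_tensor e, e'] with [tm] of [e] and [e']. *)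
Ltac assoc_norm :=
  repeat rewrite ?fmap_comp, ?tm_comp, ?comp_assoc, ?fmap_id, ?tm_id, ?comp_idl, ?comp_idr.

Ltac rewrite_chain e :=
  lazymatch type of e with
  | _ ∘ _ ∘ _ ∘ _ ∘ _ ∘ _ = _ => first [rewrite e | rewrite (comp_prefix6 e)]
  | _ ∘ _ ∘ _ ∘ _ ∘ _ = _ => first [rewrite e | rewrite (comp_prefix5 e)]
  | _ ∘ _ ∘ _ ∘ _ = _ => first [rewrite e | rewrite (comp_prefix4 e)]
  | _ ∘ _ ∘ _ = _ => first [rewrite e | rewrite (comp_prefix3 e)]
  | _ ∘ _ = _ => first [rewrite e | rewrite (comp_prefix2 e)]
  | _ => rewrite e
  end; assoc_norm.

Ltac fmap_chain H e :=
  lazymatch type of e with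
  | _ ∘ _ ∘ _ ∘ _ = _ => constr:(fmap_chain4 H e)
  | _ ∘ _ ∘ _ = _ => constr:(fmap_chain3 H e)
  | _ ∘ _ = _ => constr:(fmap_chain2 H e)
  end.

Ltac tm_chain e e' :=
  lazymatch type of e with
  | _ ∘ _ ∘ _ ∘ _ = _ => constr:(tm_chain4 e e')
  | _ ∘ _ ∘ _ = _ => constr:(tm_chain3 e e')
  | _ ∘ _ = _ => constr:(tm_chain2 e e')
  end.

Tactic Notation "rw" constr(e) := rewrite_chain e.
Tactic Notation "rw" "<-" constr(e) := rewrite_chain (eq_sym e).
Tactic Notation "rw" constr(e) "under" constr(H) :=
  let e1 := fmap_chain H e in rewrite_chain e1.
Tactic Notation "rw" "<-" constr(e) "under" constr(H) :=
  let e1 := fmap_chain H (eq_sym e) in rewrite_chain e1.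
Tactic Notation "rw" constr(e) "under" constr(H) "," constr(K) :=
  let e1 := fmap_chain K e in let e2 := fmap_chain H e1 in rewrite_chain e2.
Tactic Notation "rw" "<-" constr(e) "under" constr(H) "," constr(K) :=
  let e1 := fmap_chain K (eq_sym e) in let e2 := fmap_chain H e1 in rewrite_chain e2.
Tactic Notation "rw" constr(e) "under" constr(H) "," constr(K) "," constr(L) :=
  let e1 := fmap_chain L e in let e2 := fmap_chain K e1 in let e3 := fmap_chain H e2 in
  rewrite_chain e3.
Tactic Notation "rw_tensor" constr(e) "," constr(e') :=
  let t := tm_chain e e' in rewrite_chain t.
Tactic Notation "rw_tensor" constr(e) "," constr(e') "under" constr(H) :=
  let t := tm_chain e e' in let t' := fmap_chain H t in rewrite_chain t'.

Ltac fold_tensor :=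
  repeat match goal with
  | |- context [@fmap _ _ (tensor ?M) ?p ?q {| pr1 := ?a; pr2 := ?b |}] =>
      change (@fmap _ _ (tensor M) p q {| pr1 := a; pr2 := b |}) with (tm a b)
  end;
  repeat match goal with
  | |- context [fobj (tensor ?M) {| pr1 := ?a; pr2 := ?b |}] =>
      change (fobj (tensor M) {| pr1 := a; pr2 := b |}) with (tob (tensor M) a b)
  end.
Ltac unfold_cells :=
  intros;
  repeat match goal with
         | p : prd _ _ |- _ =>
             let a := fresh "x" in let b := fresh "y" in destruct p as [a b]
         end;
  repeat match goal with u : unit |- _ => destruct u end;
  unfold prod_delta, prod_eps, term_delta, term_eps in *; cbn in *; fold_tensor; assoc_norm.

Section MonoidalAxioms.
Variable M : MonoidalCategory.

Lemma massoc_massoc_inv (X Y Z : M) : massoc M X Y Z ∘ massoc_inv M X Y Z = idm _.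
Proof. apply (m_ax M). Qed.
Lemma massoc_inv_massoc (X Y Z : M) : massoc_inv M X Y Z ∘ massoc M X Y Z = idm _.
Proof. apply (m_ax M). Qed.
Lemma mlunit_mlunit_inv (X : M) : mlunit M X ∘ mlunit_inv M X = idm _.
Proof. apply (m_ax M). Qed.
Lemma mlunit_inv_mlunit (X : M) : mlunit_inv M X ∘ mlunit M X = idm _.
Proof. apply (m_ax M). Qed.
Lemma mrunit_mrunit_inv (X : M) : mrunit M X ∘ mrunit_inv M X = idm _.
Proof. apply (m_ax M). Qed.
Lemma mrunit_inv_mrunit (X : M) : mrunit_inv M X ∘ mrunit M X = idm _.
Proof. apply (m_ax M). Qed.
Lemma massoc_natural {X X' Y Y' Z Z' : M} (f : hom X X') (g : hom Y Y') (h : hom Z Z') :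
  massoc M X' Y' Z' ∘ tm (tm f g) h = tm f (tm g h) ∘ massoc M X Y Z.
Proof. apply (m_ax M). Qed.
Lemma mlunit_natural {X X' : M} (f : hom X X') :
  mlunit M X' ∘ tm (idm (munit M)) f = f ∘ mlunit M X.
Proof. apply (m_ax M). Qed.
Lemma mrunit_natural {X X' : M} (f : hom X X') :
  mrunit M X' ∘ tm f (idm (munit M)) = f ∘ mrunit M X.
Proof. apply (m_ax M). Qed.

End MonoidalAxioms.

Section Bicomonads.
Context {M : MonoidalCategory} (H : Bicomonad M).

Lemma bdelta_natural {X Y : M} (f : hom X Y) :
  bdelta H Y ∘ fmap H f = fmap H (fmap H f) ∘ bdelta H X.
Proof. apply (b_ax H). Qed.
Lemma beps_natural {X Y : M} (f : hom X Y) : beps H Y ∘ fmap H f = f ∘ beps H X.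
Proof. apply (b_ax H). Qed.
Lemma bdelta_coassoc (X : M) :
  fmap H (bdelta H X) ∘ bdelta H X = bdelta H (H X) ∘ bdelta H X.
Proof. apply (b_ax H). Qed.
Lemma beps_bdelta (X : M) : beps H (H X) ∘ bdelta H X = idm _.
Proof. apply (b_ax H). Qed.
Lemma fmap_beps_bdelta (X : M) : fmap H (beps H X) ∘ bdelta H X = idm _.
Proof. apply (b_ax H). Qed.
Lemma b2_natural {X X' Y Y' : M} (f : hom X X') (g : hom Y Y') :
  b2 H X' Y' ∘ tm (fmap H f) (fmap H g) = fmap H (tm f g) ∘ b2 H X Y.
Proof. apply (b_ax H). Qed.
Lemma b2_massoc (X Y Z : M) :
  fmap H (massoc M X Y Z) ∘ b2 H (X ⊗ Y) Z ∘ tm (b2 H X Y) (idm (H Z))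
  = b2 H X (Y ⊗ Z) ∘ tm (idm (H X)) (b2 H Y Z) ∘ massoc M (H X) (H Y) (H Z).
Proof. apply (b_ax H). Qed.
Lemma b2_mlunit (X : M) :
  fmap H (mlunit M X) ∘ b2 H (munit M) X ∘ tm (b0 H) (idm (H X)) = mlunit M (H X).
Proof. apply (b_ax H). Qed.
Lemma b2_mrunit (X : M) :
  fmap H (mrunit M X) ∘ b2 H X (munit M) ∘ tm (idm (H X)) (b0 H) = mrunit M (H X).
Proof. apply (b_ax H). Qed.
Lemma bdelta_b2 (X Y : M) :
  fmap H (b2 H X Y) ∘ b2 H (H X) (H Y) ∘ tm (bdelta H X) (bdelta H Y)
  = bdelta H (X ⊗ Y) ∘ b2 H X Y.
Proof. apply (b_ax H). Qed.
Lemma beps_b2 (X Y : M) : beps H (X ⊗ Y) ∘ b2 H X Y = tm (beps H X) (beps H Y).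
Proof. apply (b_ax H). Qed.
Lemma bdelta_b0 : fmap H (b0 H) ∘ b0 H = bdelta H (munit M) ∘ b0 H.
Proof. apply (b_ax H). Qed.
Lemma beps_b0 : beps H (munit M) ∘ b0 H = idm _.
Proof. apply (b_ax H). Qed.

Lemma b2_natural_l {X X' : M} (f : hom X X') (Y : M) :
  b2 H X' Y ∘ tm (fmap H f) (idm (H Y)) = fmap H (tm f (idm Y)) ∘ b2 H X Y.
Proof. rewrite <- (fmap_id H Y). apply b2_natural. Qed.
Lemma b2_natural_r (X : M) {Y Y' : M} (g : hom Y Y') :
  b2 H X Y' ∘ tm (idm (H X)) (fmap H g) = fmap H (tm (idm X) g) ∘ b2 H X Y.
Proof. rewrite <- (fmap_id H X). apply b2_natural. Qed.

Lemma comodule_tco {X Y : M} (cX : hom X (H X)) (cY : hom Y (H Y)) :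
  is_comodule (bdelta H) (beps H) cX -> is_comodule (bdelta H) (beps H) cY ->
  is_comodule (bdelta H) (beps H) (tco H cX cY).
Proof.
  unfold is_comodule, tco. intros [dX eX] [dY eY]. split; assoc_norm.
  - rw <- (bdelta_b2 X Y). rw_tensor dX, dY. rw (b2_natural cX cY). reflexivity.
  - rw (beps_b2 X Y). rw_tensor eX, eY. reflexivity.
Qed.
Lemma comodule_b0 : is_comodule (bdelta H) (beps H) (b0 H).
Proof. split; [symmetry; apply bdelta_b0 | apply beps_b0]. Qed.

Lemma tco_comod_map {X X' Y Y' : M} (cX : hom X (H X)) (cY : hom Y (H Y))
  (cX' : hom X' (H X')) (cY' : hom Y' (H Y')) (f : hom X X') (g : hom Y Y') :
  cX' ∘ f = fmap H f ∘ cX -> cY' ∘ g = fmap H g ∘ cY ->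
  tco H cX' cY' ∘ tm f g = fmap H (tm f g) ∘ tco H cX cY.
Proof.
  unfold tco; intros Hf Hg. assoc_norm. rw_tensor Hf, Hg. rw (b2_natural f g). reflexivity.
Qed.
Lemma tco_massoc {X Y Z : M} (cX : hom X (H X)) (cY : hom Y (H Y)) (cZ : hom Z (H Z)) :
  tco H cX (tco H cY cZ) ∘ massoc M X Y Z = fmap H (massoc M X Y Z) ∘ tco H (tco H cX cY) cZ.
Proof.
  unfold tco. rewrite (tm_comp_r cX), (tm_comp_l cZ). assoc_norm.
  rw <- (massoc_natural M cX cY cZ). rw (b2_massoc X Y Z). reflexivity.
Qed.
Lemma tco_mlunit {X : M} (cX : hom X (H X)) :
  cX ∘ mlunit M X = fmap H (mlunit M X) ∘ tco H (b0 H) cX.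
Proof.
  unfold tco. rewrite (tm_split_l (b0 H) cX). assoc_norm.
  rw (b2_mlunit X). rw (mlunit_natural M cX). reflexivity.
Qed.
Lemma tco_mrunit {X : M} (cX : hom X (H X)) :
  cX ∘ mrunit M X = fmap H (mrunit M X) ∘ tco H cX (b0 H).
Proof.
  unfold tco. rewrite (tm_split_r cX (b0 H)). assoc_norm.
  rw (b2_mrunit X). rw (mrunit_natural M cX). reflexivity.
Qed.

End Bicomonads.

Lemma smash_monoidal_functor {M : MonoidalCategory} (F G : Bicomonad M) :
  is_monoidal_functor (H := Fcomp F G) (smash2 F G) (smash0 F G).
Proof.
  unfold is_monoidal_functor; cbn; unfold smash2, smash0.
  repeat split; intros; assoc_norm.
  - rw (b2_natural F (fmap G f) (fmap G g)). rw (b2_natural G f g) under F. reflexivity.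
  - rewrite (tm_comp_l (idm (F (G Z)))), (tm_comp_r (idm (F (G X)))). assoc_norm.
    rw (b2_natural_l F (b2 G X Y) (G Z)). rw (b2_massoc G X Y Z) under F.
    rw (b2_massoc F (G X) (G Y) (G Z)). rw <- (b2_natural_r F (G X) (b2 G Y Z)).
    reflexivity.
  - rewrite (tm_comp_l (idm (F (G X)))). assoc_norm.
    rw (b2_natural_l F (b0 G) (G X)). rw (b2_mlunit G X) under F.
    rw (b2_mlunit F (G X)). reflexivity.
  - rewrite (tm_comp_r (idm (F (G X)))). assoc_norm.
    rw (b2_natural_r F (G X) (b0 G)). rw (b2_mrunit G X) under F.
    rw (b2_mrunit F (G X)). reflexivity.
Qed.

Section DistributiveLaw.
Context {M : MonoidalCategory} (F G : Bicomonad M)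
  (phi : forall X : M, hom (F (G X)) (G (F X)))
  (Hphi : is_distr_law (bdelta F) (beps F) (bdelta G) (beps G) phi).

Lemma phi_natural {X Y : M} (f : hom X Y) :
  phi Y ∘ fmap F (fmap G f) = fmap G (fmap F f) ∘ phi X.
Proof. apply Hphi. Qed.
Lemma phi_bdelta_G (X : M) :
  fmap G (phi X) ∘ phi (G X) ∘ fmap F (bdelta G X) = bdelta G (F X) ∘ phi X.
Proof. apply Hphi. Qed.
Lemma phi_bdelta_F (X : M) :
  phi (F X) ∘ fmap F (phi X) ∘ bdelta F (G X) = fmap G (bdelta F X) ∘ phi X.
Proof. apply Hphi. Qed.
Lemma phi_beps_F (X : M) : fmap G (beps F X) ∘ phi X = beps F (G X).
Proof. apply Hphi. Qed.
Lemma phi_beps_G (X : M) : beps G (F X) ∘ phi X = fmap F (beps G X).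
Proof. apply Hphi. Qed.

Lemma tensor_bicomodule
  (Htensor : forall X Y : M,
      phi (X ⊗ Y) ∘ fmap F (b2 G X Y) ∘ b2 F (G X) (G Y)
      = fmap G (b2 F X Y) ∘ b2 G (F X) (F Y) ∘ tm (phi X) (phi Y))
  {X Y : M} (thX : hom X (F X)) (rhoX : hom X (G X)) (thY : hom Y (F Y))
  (rhoY : hom Y (G Y)) :
  is_bicomodule phi thX rhoX -> is_bicomodule phi thY rhoY ->
  is_bicomodule phi (tco F thX thY) (tco G rhoX rhoY).
Proof.
  intros [cX1 [cX2 bX]] [cY1 [cY2 bY]].
  split; [apply comodule_tco; auto|]. split; [apply comodule_tco; auto|].
  unfold tco. assoc_norm.
  rw <- (b2_natural F rhoX rhoY). rw (Htensor X Y). rw_tensor bX, bY.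
  rw (b2_natural G thX thY). reflexivity.
Qed.

Definition cofree_coaction (X : M) : hom (F (G X)) (G (F (G X))) :=
  phi (G X) ∘ fmap F (bdelta G X).

Lemma cofree_bicomodule (X : M) :
  is_bicomodule phi (bdelta F (G X)) (cofree_coaction X).
Proof.
  unfold is_bicomodule, is_comodule, cofree_coaction. repeat split; assoc_norm.
  - symmetry; apply bdelta_coassoc.
  - apply beps_bdelta.
  - rw <- (phi_bdelta_G (G X)). rw <- (bdelta_coassoc G X) under F.
    rw (phi_natural (bdelta G X)). reflexivity.
  - rw (phi_beps_G (G X)). rw (beps_bdelta G X) under F. reflexivity.
  - rw <- (bdelta_natural F (bdelta G X)). rw (phi_bdelta_F (G X)). reflexivity.
Qed.

Lemma cofree_coaction_beps (X : M) :
  fmap G (beps G X) ∘ fmap G (beps F (G X)) ∘ cofree_coaction X = beps F (G X).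
Proof.
  unfold cofree_coaction. assoc_norm.
  rw (phi_beps_F (G X)). rw <- (beps_natural F (fmap G (beps G X))).
  rw (fmap_beps_bdelta G X) under F. reflexivity.
Qed.
Lemma cofree_coaction_proj (X : M) :
  fmap G (fmap F (beps G X)) ∘ cofree_coaction X = phi X.
Proof.
  unfold cofree_coaction. assoc_norm.
  rw <- (phi_natural (beps G X)). rw (fmap_beps_bdelta G X) under F. reflexivity.
Qed.

Lemma monoidal_law_of_cofree_tensor (X Y : M) :
  is_bicomodule phi (tco F (bdelta F (G X)) (bdelta F (G Y)))
                    (tco G (cofree_coaction X) (cofree_coaction Y)) ->
  phi (X ⊗ Y) ∘ fmap F (b2 G X Y) ∘ b2 F (G X) (G Y)
  = fmap G (b2 F X Y) ∘ b2 G (F X) (F Y) ∘ tm (phi X) (phi Y).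
Proof.
  intros [_ [_ Hcompat]].
  set (proj := fun Z : M => beps G Z ∘ beps F (G Z)).
  transitivity (fmap G (fmap F (tm (proj X) (proj Y))) ∘
                (phi (F (G X) ⊗ F (G Y))
                 ∘ fmap F (tco G (cofree_coaction X) (cofree_coaction Y))
                 ∘ tco F (bdelta F (G X)) (bdelta F (G Y)))).
  { symmetry. unfold tco, proj. assoc_norm.
    rw <- (phi_natural (tm (beps F (G X)) (beps F (G Y)))).
    rw <- (phi_natural (tm (beps G X) (beps G Y))).
    rw <- (b2_natural G (beps F (G X)) (beps F (G Y))) under F.
    rw <- (b2_natural G (beps G X) (beps G Y)) under F.
    rw_tensor (cofree_coaction_beps X), (cofree_coaction_beps Y) under F.
    rw <- (b2_natural F (beps F (G X)) (beps F (G Y))).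
    rw_tensor (fmap_beps_bdelta F (G X)), (fmap_beps_bdelta F (G Y)). reflexivity. }
  rewrite Hcompat.
  unfold tco, proj. assoc_norm.
  rw <- (b2_natural F (beps F (G X)) (beps F (G Y))) under G.
  rw_tensor (fmap_beps_bdelta F (G X)), (fmap_beps_bdelta F (G Y)) under G.
  rw <- (b2_natural F (beps G X) (beps G Y)) under G.
  rw <- (b2_natural G (fmap F (beps G X)) (fmap F (beps G Y))).
  rw_tensor (cofree_coaction_proj X), (cofree_coaction_proj Y). reflexivity.
Qed.

Lemma lifted_monoidal_iff : lifted_monoidal F G phi <-> monoidal_distr_law F G phi.
Proof.
  split.
  - intros [Htensor [Hunit _]]. split.
    + intros X Y. apply monoidal_law_of_cofree_tensor.
      exact (Htensor _ _ _ _ _ _ (cofree_bicomodule X) (cofree_bicomodule Y)).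
    + apply Hunit.
  - intros [Htensor Hunit]. split; [|split; [|split; [|split]]].
    + intros. apply tensor_bicomodule; auto.
    + split; [apply comodule_b0|]. split; [apply comodule_b0|]. exact Hunit.
    + intros X thX rhoX X' thX' rhoX' Y thY rhoY Y' thY' rhoY' f g _ _ _ _ [f1 f2] [g1 g2].
      split; apply tco_comod_map; auto.
    + intros; split; split; try apply tco_massoc.
      all: apply fmap_inverse_coaction with (f := massoc M X Y Z);
        [apply tco_massoc | apply massoc_massoc_inv | apply massoc_inv_massoc].
    + intros; repeat split.
      all: first
        [ apply tco_mlunit | apply tco_mrunit
        | apply fmap_inverse_coaction with (f := mlunit M X);
          [apply tco_mlunit | apply mlunit_mlunit_inv | apply mlunit_inv_mlunit]
        | apply fmap_inverse_coaction with (f := mrunit M X);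
          [apply tco_mrunit | apply mrunit_mrunit_inv | apply mrunit_inv_mrunit] ].
Qed.

Lemma smash_comonad : is_comonad (H := Fcomp F G) (smash_delta F G phi) (smash_eps F G).
Proof.
  unfold is_comonad, natural; cbn; unfold smash_delta, smash_eps.
  repeat split; intros; assoc_norm.
  - rw (bdelta_natural F (fmap G f)). rw (bdelta_natural G f) under F, F.
    rw (phi_natural (fmap G f)) under F. reflexivity.
  - rw (beps_natural F (fmap G f)). rw (beps_natural G f). reflexivity.
  - rw <- (phi_bdelta_F (G X)) under F.
    rw <- (phi_natural (fmap F (bdelta G X))) under F.
    rw <- (phi_natural (phi (G X))) under F.
    rw (bdelta_natural F (bdelta G X)) under F.
    rw <- (phi_natural (bdelta G X)) under F, F.
    rw (bdelta_coassoc G X) under F, F, F.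
    rw (phi_bdelta_G (G X)) under F, F.
    rw (bdelta_natural F (phi (G X))). rw (bdelta_natural F (fmap F (bdelta G X))).
    rw <- (bdelta_coassoc F (G X)). reflexivity.
  - rw (beps_natural F (phi (G X))). rw (beps_natural F (fmap F (bdelta G X))).
    rw (beps_bdelta F (G X)). rw (phi_beps_G (G X)). rw (beps_bdelta G X) under F.
    reflexivity.
  - rw (phi_beps_F (G X)) under F. rw <- (beps_natural F (fmap G (beps G X))) under F.
    rw (fmap_beps_bdelta G X) under F, F. rw (fmap_beps_bdelta F (G X)). reflexivity.
Qed.

Lemma smash_delta_proj (X : M) :
  fmap G (fmap F (beps G X)) ∘ beps F (G (F (G X))) ∘ smash_delta F G phi X = phi X.
Proof.
  unfold smash_delta. assoc_norm.
  rw (beps_natural F (phi (G X))). rw (beps_natural F (fmap F (bdelta G X))).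
  rw (beps_bdelta F (G X)). rw <- (phi_natural (beps G X)).
  rw (fmap_beps_bdelta G X) under F. reflexivity.
Qed.

Lemma smash_bicomonad_compat :
  monoidal_distr_law F G phi ->
  bicomonad_compat (H := Fcomp F G) (smash_delta F G phi) (smash_eps F G)
                   (smash2 F G) (smash0 F G).
Proof.
  intros [Htensor Hunit].
  unfold bicomonad_compat; cbn; unfold smash_delta, smash_eps, smash2, smash0.
  repeat split; intros; assoc_norm.
  - rw (b2_natural F (phi (G X)) (phi (G Y))).
    rw (b2_natural F (fmap F (bdelta G X)) (fmap F (bdelta G Y))).
    rw (bdelta_natural F (b2 G X Y)). rw <- (bdelta_b2 F (G X) (G Y)).
    rw <- (bdelta_b2 G X Y) under F, F. rw (phi_natural (b2 G X Y)) under F.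
    rw <- (b2_natural F (bdelta G X) (bdelta G Y)) under F.
    rw (Htensor (G X) (G Y)) under F. reflexivity.
  - rw (beps_natural F (b2 G X Y)). rw (beps_b2 F (G X) (G Y)). rw (beps_b2 G X Y).
    reflexivity.
  - rw (bdelta_natural F (b0 G)). rw <- (bdelta_b0 F). rw <- (bdelta_b0 G) under F, F.
    rw (phi_natural (b0 G)) under F. rw Hunit under F. reflexivity.
  - rw (beps_natural F (b0 G)). rw (beps_b0 G). rw (beps_b0 F). reflexivity.
Qed.

Lemma monoidal_of_smash_compat :
  bicomonad_compat (H := Fcomp F G) (smash_delta F G phi) (smash_eps F G)
                   (smash2 F G) (smash0 F G) ->
  monoidal_distr_law F G phi.
Proof.
  intros [Hdelta2 [_ [Hdelta0 _]]].
  set (proj := fun Z : M => fmap G (fmap F (beps G Z)) ∘ beps F (G (F (G Z)))).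
  split.
  - intros X Y.
    transitivity (proj (X ⊗ Y) ∘ (smash_delta F G phi (X ⊗ Y) ∘ smash2 F G X Y)).
    { unfold proj. rewrite comp_assoc, smash_delta_proj. unfold smash2. assoc_norm.
      reflexivity. }
    replace (smash_delta F G phi (X ⊗ Y) ∘ smash2 F G X Y)
      with (fmap (Fcomp F G) (smash2 F G X Y) ∘ smash2 F G (F (G X)) (F (G Y))
            ∘ tm (smash_delta F G phi X) (smash_delta F G phi Y)) by exact (Hdelta2 X Y).
    unfold proj. cbn. unfold smash2, smash_delta. assoc_norm.
    rw (beps_natural F (fmap G (fmap F (b2 G X Y)))).
    rw (beps_natural F (fmap G (b2 F (G X) (G Y)))).
    rw (beps_natural F (b2 G (F (G X)) (F (G Y)))).
    rw (beps_b2 F (G (F (G X))) (G (F (G Y)))).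
    rw (beps_b2 G X Y) under G, F.
    rw <- (b2_natural F (beps G X) (beps G Y)) under G.
    rw <- (b2_natural G (fmap F (beps G X)) (fmap F (beps G Y))).
    rewrite <- (smash_delta_proj X), <- (smash_delta_proj Y).
    unfold smash_delta. assoc_norm. reflexivity.
  - transitivity (proj (munit M) ∘ (smash_delta F G phi (munit M) ∘ smash0 F G)).
    { unfold proj. rewrite comp_assoc, smash_delta_proj. unfold smash0. assoc_norm.
      reflexivity. }
    replace (smash_delta F G phi (munit M) ∘ smash0 F G)
      with (fmap (Fcomp F G) (smash0 F G) ∘ smash0 F G) by exact Hdelta0.
    unfold proj. cbn. unfold smash0. assoc_norm.
    rw (beps_natural F (fmap G (fmap F (b0 G)))).
    rw (beps_natural F (fmap G (b0 F))).
    rw (beps_natural F (b0 G)). rw (beps_b0 F).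
    rw (beps_b0 G) under G, F. reflexivity.
Qed.

Lemma tensorF_cell_natural {X X' Y Y' : M} (f : hom X X') (g : hom Y Y') :
  b2 G (F X') (F Y') ∘ tm (phi X') (phi Y') ∘ tm (fmap F (fmap G f)) (fmap F (fmap G g)) =
  fmap G (tm (fmap F f) (fmap F g)) ∘ b2 G (F X) (F Y) ∘ tm (phi X) (phi Y).
Proof.
  rw_tensor (phi_natural f), (phi_natural g). rw (b2_natural G (fmap F f) (fmap F g)).
  reflexivity.
Qed.
Lemma tensorF_cell_bdelta (X Y : M) :
  bdelta G (F X ⊗ F Y) ∘ b2 G (F X) (F Y) ∘ tm (phi X) (phi Y) =
  fmap G (b2 G (F X) (F Y)) ∘ fmap G (tm (phi X) (phi Y))
  ∘ b2 G (F (G X)) (F (G Y)) ∘ tm (phi (G X)) (phi (G Y))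
  ∘ tm (fmap F (bdelta G X)) (fmap F (bdelta G Y)).
Proof.
  rw <- (bdelta_b2 G (F X) (F Y)).
  rw_tensor (eq_sym (phi_bdelta_G X)), (eq_sym (phi_bdelta_G Y)).
  rw (b2_natural G (phi X) (phi Y)). reflexivity.
Qed.
Lemma tensorF_cell_beps (X Y : M) :
  beps G (F X ⊗ F Y) ∘ b2 G (F X) (F Y) ∘ tm (phi X) (phi Y) =
  tm (fmap F (beps G X)) (fmap F (beps G Y)).
Proof. rw (beps_b2 G (F X) (F Y)). rw_tensor (phi_beps_G X), (phi_beps_G Y). reflexivity. Qed.

Lemma Ftensor_cell_natural {X X' Y Y' : M} (f : hom X X') (g : hom Y Y') :
  phi (X' ⊗ Y') ∘ fmap F (b2 G X' Y') ∘ fmap F (tm (fmap G f) (fmap G g)) =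
  fmap G (fmap F (tm f g)) ∘ phi (X ⊗ Y) ∘ fmap F (b2 G X Y).
Proof. rw (b2_natural G f g) under F. rw (phi_natural (tm f g)). reflexivity. Qed.
Lemma Ftensor_cell_bdelta (X Y : M) :
  bdelta G (F (X ⊗ Y)) ∘ phi (X ⊗ Y) ∘ fmap F (b2 G X Y) =
  fmap G (phi (X ⊗ Y)) ∘ fmap G (fmap F (b2 G X Y))
  ∘ phi (G X ⊗ G Y) ∘ fmap F (b2 G (G X) (G Y))
  ∘ fmap F (tm (bdelta G X) (bdelta G Y)).
Proof.
  rw <- (phi_bdelta_G (X ⊗ Y)). rw <- (bdelta_b2 G X Y) under F.
  rw (phi_natural (b2 G X Y)). reflexivity.
Qed.
Lemma Ftensor_cell_beps (X Y : M) :
  beps G (F (X ⊗ Y)) ∘ phi (X ⊗ Y) ∘ fmap F (b2 G X Y) = fmap F (tm (beps G X) (beps G Y)).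
Proof. rw (phi_beps_G (X ⊗ Y)). rw (beps_b2 G X Y) under F. reflexivity. Qed.

Lemma Funit_cell_bdelta :
  bdelta G (F (munit M)) ∘ phi (munit M) ∘ fmap F (b0 G) =
  fmap G (phi (munit M)) ∘ fmap G (fmap F (b0 G)) ∘ phi (munit M) ∘ fmap F (b0 G).
Proof.
  rw <- (phi_bdelta_G (munit M)). rw <- (bdelta_b0 G) under F.
  rw (phi_natural (b0 G)). reflexivity.
Qed.
Lemma Funit_cell_beps :
  beps G (F (munit M)) ∘ phi (munit M) ∘ fmap F (b0 G) = idm (F (munit M)).
Proof. rw (phi_beps_G (munit M)). rw (beps_b0 G) under F. reflexivity. Qed.

Lemma cmd_condition_iff : cmd_condition F G phi <-> monoidal_distr_law F G phi.
Proof.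
  unfold cmd_condition, monoidal_distr_law, is_cmd_1cell, is_cmd_2cell, natural; cbn.
  split.
  - intros [[_ [_ [_ Htensor]]] [_ [_ [_ Hunit]]]]. split.
    + intros X Y. etransitivity; [exact (Htensor (mkprd X Y))|]. assoc_norm. reflexivity.
    + exact (Hunit tt).
  - intros [Htensor Hunit]. repeat split; unfold_cells.
    + apply tensorF_cell_natural.
    + apply tensorF_cell_bdelta.
    + apply tensorF_cell_beps.
    + apply Ftensor_cell_natural.
    + apply Ftensor_cell_bdelta.
    + apply Ftensor_cell_beps.
    + apply b2_natural.
    + apply Htensor.
    + reflexivity.
    + symmetry; apply bdelta_b0.
    + apply beps_b0.
    + reflexivity.
    + apply Funit_cell_bdelta.
    + apply Funit_cell_beps.
    + reflexivity.
    + apply Hunit.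
Qed.

Lemma cc_condition_iff : cc_condition F G phi <-> monoidal_distr_law F G phi.
Proof.
  unfold cc_condition, monoidal_distr_law, is_cc_1cell, is_cmd_1cell, natural; cbn.
  split.
  - intros [[_ [_ Htensor]] [_ [_ Hunit]]]. split.
    + intros X Y. symmetry. etransitivity; [exact (Htensor (mkprd X Y))|].
      assoc_norm. reflexivity.
    + specialize (Hunit tt). rewrite comp_idr in Hunit. symmetry; exact Hunit.
  - intros [Htensor Hunit]. repeat split; unfold_cells.
    + apply b2_natural.
    + symmetry; apply bdelta_b2.
    + apply beps_b2.
    + apply b2_natural.
    + symmetry; apply bdelta_b2.
    + apply beps_b2.
    + symmetry; apply Htensor.
    + reflexivity.
    + symmetry; apply bdelta_b0.
    + apply beps_b0.
    + reflexivity.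
    + symmetry; apply bdelta_b0.
    + apply beps_b0.
    + symmetry; apply Hunit.
Qed.

End DistributiveLaw.

Theorem theorem3p5 (M : MonoidalCategory) (F G : Bicomonad M)
  (phi : forall X : M, hom (F (G X)) (G (F X)))
  (Hphi : is_distr_law (bdelta F) (beps F) (bdelta G) (beps G) phi) :
  (lifted_monoidal F G phi <-> monoidal_distr_law F G phi) /\
  (monoidal_distr_law F G phi <->
     is_bicomonad (H := Fcomp F G) (smash_delta F G phi) (smash_eps F G)
                  (smash2 F G) (smash0 F G)) /\
  (is_bicomonad (H := Fcomp F G) (smash_delta F G phi) (smash_eps F G)
                (smash2 F G) (smash0 F G) <-> cmd_condition F G phi) /\
  (cmd_condition F G phi <-> cc_condition F G phi).
Proof.
  assert (Hsmash : monoidal_distr_law F G phi <->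
     is_bicomonad (H := Fcomp F G) (smash_delta F G phi) (smash_eps F G)
                  (smash2 F G) (smash0 F G)).
  { split.
    - intros Hmon. split; [exact (smash_comonad F G phi Hphi)|].
      split; [apply smash_monoidal_functor | exact (smash_bicomonad_compat F G phi Hphi Hmon)].
    - intros [_ [_ Hcompat]]. exact (monoidal_of_smash_compat F G phi Hphi Hcompat). }
  pose proof (lifted_monoidal_iff F G phi Hphi) as Hlifted.
  pose proof (cmd_condition_iff F G phi Hphi) as Hcmd.
  pose proof (cc_condition_iff F G phi) as Hcc.
  tauto.
Qed.
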